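(* For $s\in\{1/2,1,3/2,\dots\}$, integers $0\le\sigma\le 2s$ and $-\sigma\le\mu\le\sigma$, let $p^{(s)}_{\sigma\mu}$ be the Majorana polynomial of the tensor operator $T^{(s)}_{\sigma\mu}$. Then: (1) $L\big(p^{(s)}_{\sigma\mu}\big)=\frac{\sqrt{(2s+\sigma+1)(2s-\sigma)}}{2s}\,p^{(s-1/2)}_{\sigma\mu}$ if $s>\sigma/2$, and $L\big(p^{(s)}_{\sigma\mu}\big)=0$ otherwise. In particular $(2s+1)^{-1/2}L\big(p^{(s)}_{00}\big)=(2s)^{-1/2}p^{(s-1/2)}_{00}$, and consequently $L$ preserves traces: for every operator $C$ on $\mathcal{H}_s$ ($s\ge 1$), the operator $C'$ on $\mathcal{H}_{s-1/2}$ with $p_{C'}=L(p_C)$ satisfies $\mathrm{Tr}\,C'=\mathrm{Tr}\,C$. (2) For every $\sigma\le 2s$, \[ p^{(s)}_{\sigma\mu}(z)=l(s,\sigma)^{-1}\,(z^az_a)^{2s-\sigma}\,p^{(\sigma/2)}_{\sigma\mu}(z),\qquad l(s,\sigma)=\sqrt{\frac{(2s+\sigma+1)!\,(2s-\sigma)!}{(2\sigma+1)!}}\;\frac{\sigma!}{(2s)!}. \]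
   Context: $\mathcal{H}_s$ is the spin-$s$ Hilbert space with orthonormal $S_z$-eigenbasis $\{|s,m\rangle\}$. The tensor operators are $T^{(s)}_{\sigma\mu}=\sum_{m,m'=-s}^{s}(-1)^{s-m'}C^{\sigma\mu}_{sm,\,s,-m'}|s,m\rangle\langle s,m'|$, where $C^{jm}_{j_1m_1,j_2m_2}$ are the standard Clebsch–Gordan coefficients. Treat $z_1,z_2,z^1,z^2$ as independent variables, $\partial_a=\partial/\partial z_a$, $\partial^a=\partial/\partial z^a$, and repeated indices $a\in\{1,2\}$ are summed (so $z^az_a=z^1z_1+z^2z_2$). With $\langle -\mathbf n_B|=\sum_m(-1)^{s-m}\sqrt{\binom{2s}{s-m}}z_1^{s+m}z_2^{s-m}\langle s,m|$ and $|-\mathbf n_B\rangle=\sum_m(-1)^{s-m}\sqrt{\binom{2s}{s-m}}(z^1)^{s+m}(z^2)^{s-m}|s,m\rangle$, the Majorana polynomial of an operator $C$ on $\mathcal{H}_s$ is $p_C=\langle-\mathbf n_B|C|-\mathbf n_B\rangle$; this is a bijection from operators on $\mathcal{H}_s$ to the space $P^{(N,N)}$ ($N=2s$) of polynomials all of whose monomials $z_1^\alpha z_2^\beta(z^1)^\gamma(z^2)^\delta$ have $\alpha+\beta=\gamma+\delta=N$. The partial trace operator $L:P^{(N,N)}\to P^{(N-1,N-1)}$ is $L(p)=N^{-2}\,\partial_a\partial^a p$. *)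

From mathcomp Require Import all_boot all_order all_algebra.
From mathcomp Require Import mpoly.
Set Implicit Arguments. Unset Strict Implicit. Unset Printing Implicit Defensive.
Import Order.TTheory GRing.Theory Num.Theory.
Local Open Scope ring_scope.

(* Spin values, magnetic
   quantum numbers etc. are represented DOUBLED: N = 2s, index k = s + m in
   'I_(N+1), doubled spins as integers. *)

Section Defs.
Variable C : numClosedFieldType.

Definition half (x : int) : int := (x %/ 2)%Z.
Definition ifact (x : int) : C := ((`|x|%N)`!)%:R.

(* Standard (Condon-Shortley) Clebsch-Gordan coefficient C^{J M}_{j1 m1, j2 m2}
   via Racah's formula; all six arguments are given DOUBLED
   (tj1 = 2 j1, etc.). *)
Definition CG (tj1 tm1 tj2 tm2 tJ tM : int) : C :=
  if [&& tM == tm1 + tm2, (0 <= tj1), (0 <= tj2), (0 <= tJ),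
         `|tm1| <= tj1, `|tm2| <= tj2, `|tM| <= tJ,
         (2 %| tj1 + tm1)%Z, (2 %| tj2 + tm2)%Z, (2 %| tJ + tM)%Z,
         (2 %| tj1 + tj2 + tJ)%Z, `|tj1 - tj2| <= tJ & tJ <= tj1 + tj2]
  then
    sqrtC ((tJ + 1)%:~R * ifact (half (tJ + tj1 - tj2))
             * ifact (half (tJ - tj1 + tj2)) * ifact (half (tj1 + tj2 - tJ))
             / ifact (half (tj1 + tj2 + tJ) + 1))
    * sqrtC (ifact (half (tJ + tM)) * ifact (half (tJ - tM))
             * ifact (half (tj1 - tm1)) * ifact (half (tj1 + tm1))
             * ifact (half (tj2 - tm2)) * ifact (half (tj2 + tm2)))
    * \sum_(k < `|half (tj1 + tj2 - tJ)|%N.+1)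
        (if [&& 0 <= half (tj1 + tj2 - tJ) - k%:Z,
                0 <= half (tj1 - tm1) - k%:Z,
                0 <= half (tj2 + tm2) - k%:Z,
                0 <= half (tJ - tj2 + tm1) + k%:Z &
                0 <= half (tJ - tj1 - tm2) + k%:Z]
         then (-1) ^+ k /
              (ifact k%:Z * ifact (half (tj1 + tj2 - tJ) - k%:Z)
               * ifact (half (tj1 - tm1) - k%:Z) * ifact (half (tj2 + tm2) - k%:Z)
               * ifact (half (tJ - tj2 + tm1) + k%:Z)
               * ifact (half (tJ - tj1 - tm2) + k%:Z))
         else 0)
  else 0.

(* Operators on H_s (N = 2s) are matrices 'M_(N+1); index k : 'I_(N+1)
   corresponds to the basis vector |s, m> with m = k - s, i.e. 2m = 2k - N.
   Entry (k,k') is <s,m|A|s,m'>. *)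

(* Tensor operator T^{(s)}_{sigma mu}, N = 2s:
   sum_{m,m'} (-1)^{s-m'} C^{sigma mu}_{s m, s, -m'} |s,m><s,m'| *)
Definition tensorOp (N sigma : nat) (mu : int) : 'M[C]_N.+1 :=
  \matrix_(k < N.+1, k' < N.+1)
    ((-1) ^+ (N - k') *
     CG N%:Z (2 * k%:Z - N%:Z) N%:Z (- (2 * k'%:Z - N%:Z)) (2 * sigma%:Z) (2 * mu)).

(* Variables: z_1 = 'X_0, z_2 = 'X_1, z^1 = 'X_2, z^2 = 'X_3. *)
Definition z1 : {mpoly C[4]} := 'X_(inord 0).
Definition z2 : {mpoly C[4]} := 'X_(inord 1).
Definition w1 : {mpoly C[4]} := 'X_(inord 2).
Definition w2 : {mpoly C[4]} := 'X_(inord 3).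

(* Majorana polynomial p_A = < -n_B | A | -n_B >, with
   < -n_B | = sum_m (-1)^{s-m} sqrt(binom(2s, s-m)) z_1^{s+m} z_2^{s-m} <s,m|
   | -n_B > = sum_m (-1)^{s-m} sqrt(binom(2s, s-m)) (z^1)^{s+m} (z^2)^{s-m} |s,m>
   (s + m = k, s - m = N - k). *)
Definition majorana (N : nat) (A : 'M[C]_N.+1) : {mpoly C[4]} :=
  \sum_(k < N.+1) \sum_(k' < N.+1)
    (((-1) ^+ (N - k) * sqrtC ('C(N, N - k))%:R) * A k k'
      * ((-1) ^+ (N - k') * sqrtC ('C(N, N - k'))%:R))
    *: (z1 ^+ k * z2 ^+ (N - k) * w1 ^+ k' * w2 ^+ (N - k')).

Definition pT (N sigma : nat) (mu : int) : {mpoly C[4]} :=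
  majorana (tensorOp N sigma mu).

Definition Lop (N : nat) (p : {mpoly C[4]}) : {mpoly C[4]} :=
  (N%:R ^+ 2)^-1 *: (mderiv (inord 0) (mderiv (inord 2) p)
                     + mderiv (inord 1) (mderiv (inord 3) p)).

Definition zz : {mpoly C[4]} := w1 * z1 + w2 * z2.

Definition lcoef (N sigma : nat) : C :=
  sqrtC (((N + sigma + 1)`! * (N - sigma)`!)%:R / ((2 * sigma + 1)`!)%:R)
  * (sigma`!)%:R / (N`!)%:R.

End Defs.

From Pilot Require Import Defs.
From mathcomp Require Import all_boot all_order all_algebra.
From mathcomp Require Import mpoly.
From mathcomp Require Import ring zify.
Import Order.TTheory GRing.Theory Num.Theory.
Local Open Scope ring_scope.
Set Implicit Arguments. Unset Strict Implicit. Unset Printing Implicit Defensive.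

(* Racah's formula shows that p^(s)_{σμ} is a constant multiple of
   (z^a z_a)^(2s-σ) q_{σμ}, where q_{σμ} = [harm σ μ] has coefficient
   (-1)^(σ-j) C(σ,j) C(σ,j') on z_1^j z_2^(σ-j) (z^1)^j' (z^2)^(σ-j') when
   j - j' = μ: the alternating sum in Racah's formula is exactly the binomial
   expansion of (z^a z_a)^(2s-σ).  Part (2) is then a comparison of constants.
   For part (1), q_{σμ} is annihilated by ∂_a ∂^a, and for such a harmonic q of
   bidegree (σ,σ) Euler's identity gives
   ∂_a ∂^a ((z^a z_a)^(n+1) q) = (n+1)(n+2+2σ) (z^a z_a)^n q.
   For the trace, comparing diagonal coefficients of L(p_C) gives
   C'_jj = ((j+1) C_{j+1,j+1} + (2s-j) C_jj) / 2s, and these weights add up to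
   2s on every C_ii. *)

Local Notation i0 := (inord 0 : 'I_4).
Local Notation i1 := (inord 1 : 'I_4).
Local Notation i2 := (inord 2 : 'I_4).
Local Notation i3 := (inord 3 : 'I_4).

Definition mono4 (a b c d : nat) : 'X_{1..4} := [multinom [tuple a; b; c; d]].

Lemma mono4E (a b c d : nat) (i : 'I_4) : mono4 a b c d i = nth 0%N [:: a; b; c; d] i.
Proof. by rewrite multinomE (tnth_nth 0%N). Qed.

Lemma mono4_0 a b c d : mono4 a b c d i0 = a. Proof. by rewrite mono4E inordK. Qed.
Lemma mono4_1 a b c d : mono4 a b c d i1 = b. Proof. by rewrite mono4E inordK. Qed.
Lemma mono4_2 a b c d : mono4 a b c d i2 = c. Proof. by rewrite mono4E inordK. Qed.
Lemma mono4_3 a b c d : mono4 a b c d i3 = d. Proof. by rewrite mono4E inordK. Qed.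
Definition mono4_val := (mono4_0, mono4_1, mono4_2, mono4_3).

Lemma mono4_eta (m : 'X_{1..4}) : m = mono4 (m i0) (m i1) (m i2) (m i3).
Proof.
apply/mnmP => -[[|[|[|[|j]]]] hj] //; rewrite mono4E /=.
all: by congr (m _); apply/val_inj; rewrite /= inordK.
Qed.

Lemma eq_mono4 a b c d a' b' c' d' :
  (mono4 a b c d == mono4 a' b' c' d') = [&& a == a', b == b', c == c' & d == d'].
Proof. by rewrite -val_eqE /= -val_eqE /= !eqseq_cons andbT. Qed.

Lemma mono4D a b c d a' b' c' d' :
  (mono4 a b c d + mono4 a' b' c' d')%MM = mono4 (a + a') (b + b') (c + c') (d + d').
Proof. by apply/mnmP => -[[|[|[|[|j]]]] hj]; rewrite mnmDE !mono4E. Qed.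

Lemma mono4B a b c d a' b' c' d' :
  (mono4 a b c d - mono4 a' b' c' d')%MM = mono4 (a - a') (b - b') (c - c') (d - d').
Proof. by apply/mnmP => -[[|[|[|[|j]]]] hj]; rewrite mnmBE !mono4E. Qed.

Lemma lem_mono4 a b c d m :
  (mono4 a b c d <= m)%MM = [&& a <= m i0, b <= m i1, c <= m i2 & d <= m i3]%N.
Proof.
apply/mnm_lepP/and4P => [le_m | [ha hb hc hd] i].
  by move: (le_m i0) (le_m i1) (le_m i2) (le_m i3); rewrite !mono4_val.
by rewrite [m]mono4_eta; case: i => -[|[|[|[|j]]]] hj; rewrite !mono4E.
Qed.

Lemma mnm1_mono4 (i : 'I_4) :
  U_(i)%MM = mono4 (i == 0%N :> nat) (i == 1%N :> nat) (i == 2%N :> nat) (i == 3%N :> nat).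
Proof.
by apply/mnmP => j; rewrite mnm1E mono4E; case: i j => -[|[|[|[|i]]]] hi [[|[|[|[|j]]]] hj].
Qed.

Lemma mcoeff_sum n (R : nzRingType) (I : Type) (r : seq I) (Q : pred I)
    (F : I -> {mpoly R[n]}) m :
  (\sum_(i <- r | Q i) F i)@_m = \sum_(i <- r | Q i) (F i)@_m.
Proof. exact: raddf_sum. Qed.

Lemma mcoeffMXE n (R : nzRingType) (p : {mpoly R[n]}) m k :
  (p * 'X_[m])@_k = if (m <= k)%MM then p@_(k - m) else 0.
Proof.
case: ifP => [le_mk | nle_mk]; first by rewrite -{1}(submK le_mk) addmC mcoeffMX.
apply/eqP; rewrite mcoeff_eq0 (perm_mem (msuppMX p m)).
by apply/mapP => -[m' _ km]; rewrite km lem_addr in nle_mk.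
Qed.

Lemma sum_ord_delta (R : pzSemiRingType) (n a : nat) (x : R) :
  \sum_(k < n) (k == a :> nat)%:R * x = (a < n)%:R * x.
Proof.
case: ltnP => [lt_an | le_na].
  rewrite (bigD1 (Ordinal lt_an)) //= eqxx big1 ?addr0 // => i.
  by rewrite -val_eqE /= => /negPf ->; rewrite mul0r.
rewrite big1 ?mul0r // => i _.
have /negPf-> : (i != a :> nat) by rewrite neq_ltn (leq_trans (ltn_ord i)).
by rewrite mul0r.
Qed.

Section Bihomogeneous.
Variable C : numClosedFieldType.
Local Notation P := {mpoly C[4]}.
Local Notation zz := (zz C).

Definition X4 (a b c d : nat) : P := 'X_[mono4 a b c d].

Lemma X4E a b c d : z1 C ^+ a * z2 C ^+ b * w1 C ^+ c * w2 C ^+ d = X4 a b c d.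
Proof.
rewrite /z1 /z2 /w1 /w2 /X4 !mpolyXn -!mpolyXD; congr 'X_[_].
apply/mnmP => -[[|[|[|[|j]]]] hj] //.
all: by rewrite !mnmDE !mulmnE !mnm1E mono4E -!val_eqE /= !inordK //= !mul0n mul1n ?addn0 ?add0n.
Qed.

Lemma mcoeff_X4 a b c d m :
  (X4 a b c d)@_m = [&& a == m i0, b == m i1, c == m i2 & d == m i3]%:R.
Proof. by rewrite /X4 mcoeffX {1}[m]mono4_eta eq_mono4. Qed.

Lemma mcoeff_X4M a b c d (p : P) m :
  (X4 a b c d * p)@_m = if [&& a <= m i0, b <= m i1, c <= m i2 & d <= m i3]%N
    then p@_(mono4 (m i0 - a) (m i1 - b) (m i2 - c) (m i3 - d)) else 0.
Proof. by rewrite mulrC mcoeffMXE lem_mono4 [X in p@_(X - _)]mono4_eta mono4B. Qed.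

Definition bihom (N : nat) (f : nat -> nat -> C) : P :=
  \sum_(k < N.+1) \sum_(k' < N.+1) f k k' *: X4 k (N - k) k' (N - k').

Lemma mcoeff_bihom N f m : (bihom N f)@_m =
  if (m i0 + m i1 == N)%N && (m i2 + m i3 == N)%N then f (m i0) (m i2) else 0.
Proof.
pose c := if (N - m i0 == m i1)%N && (N - m i2 == m i3)%N then f (m i0) (m i2) else 0.
have term (k k' : nat) : (f k k' *: X4 k (N - k) k' (N - k'))@_m =
    (k == m i0)%:R * ((k' == m i2)%:R * c).
  rewrite mcoeffZ mcoeff_X4 /c !mulrb.
  have [->|_] := eqVneq k (m i0); last by rewrite /= mul0r !mulr0.
  have [->|_] := eqVneq k' (m i2); last by rewrite /= andbF mul0r !mulr0.
  by rewrite /= !mul1r; case: ifP; rewrite ?mulr1 ?mulr0.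
rewrite /bihom mcoeff_sum.
under eq_bigr => k _ do rewrite mcoeff_sum.
under eq_bigr => k _ do under eq_bigr => k' _ do rewrite term.
under eq_bigr => k _ do rewrite -mulr_sumr sum_ord_delta.
rewrite sum_ord_delta /c.
have -> : (m i0 + m i1 == N)%N && (m i2 + m i3 == N)%N =
  [&& (m i0 < N.+1)%N, (m i2 < N.+1)%N & (N - m i0 == m i1)%N && (N - m i2 == m i3)%N].
  by apply/idP/idP; lia.
by case: (m i0 < N.+1)%N; case: (m i2 < N.+1)%N; case: ifP; rewrite ?mul1r ?mul0r.
Qed.

Lemma eq_bihom N (f g : nat -> nat -> C) :
  (forall k k', (k <= N)%N -> (k' <= N)%N -> f k k' = g k k') -> bihom N f = bihom N g.
Proof. by move=> fg; apply: eq_bigr => k _; apply: eq_bigr => k' _; rewrite fg // -ltnS. Qed.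

Lemma bihom_inj N (f g : nat -> nat -> C) : bihom N f = bihom N g ->
  forall k k', (k <= N)%N -> (k' <= N)%N -> f k k' = g k k'.
Proof.
move=> fg k k' le_kN le_k'N; have := congr1 (mcoeff (mono4 k (N - k) k' (N - k'))) fg.
by rewrite !mcoeff_bihom !mono4_val !subnKC // !eqxx.
Qed.

Lemma scale_bihom (c : C) N f : c *: bihom N f = bihom N (fun k k' => c * f k k').
Proof.
rewrite scaler_sumr; apply: eq_bigr => k _.
by rewrite scaler_sumr; apply: eq_bigr => k' _; rewrite scalerA.
Qed.

Lemma bihom0 N : bihom N (fun _ _ => 0) = 0.
Proof.
rewrite -[RHS](scale0r (bihom N (fun _ _ => 0))) scale_bihom.
by apply: eq_bihom => k k' _ _; rewrite mul0r.
Qed.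

Lemma zz_expE n : zz ^+ n = \sum_(i < n.+1) 'C(n, i)%:R *: X4 (n - i) i (n - i) i.
Proof.
rewrite /Defs.zz exprDn; apply: eq_bigr => i _.
by rewrite scaler_nat -X4E !exprMn; congr (_ *+ _); ring.
Qed.

Lemma zzXM_bihom n s f : zz ^+ n * bihom s f = bihom (n + s) (fun k k' =>
  \sum_(i < n.+1) if [&& n - i <= k, n - i <= k', i <= n + s - k & i <= n + s - k']%N
                  then 'C(n, i)%:R * f (k - (n - i))%N (k' - (n - i))%N else 0).
Proof.
apply/mpolyP => m; rewrite mcoeff_bihom zz_expE mulr_suml mcoeff_sum.
under eq_bigr => i _ do rewrite -scalerAl mcoeffZ mcoeff_X4M mcoeff_bihom !mono4_val.
case: ifP => [/andP[/eqP E01 /eqP E23] | Nm]; last first.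
  apply: big1 => i _; have lt_in := ltn_ord i.
  case: ifP => [le_m|]; last by rewrite mulr0.
  by rewrite ifF ?mulr0 //; move: Nm le_m; lia.
apply: eq_bigr => i _; have lt_in := ltn_ord i.
have -> : [&& n - i <= m i0, i <= m i1, n - i <= m i2 & i <= m i3]%N =
          [&& n - i <= m i0, n - i <= m i2, i <= n + s - m i0 & i <= n + s - m i2]%N.
  by apply/idP/idP; lia.
case: ifP => [le_m|]; last by rewrite mulr0.
by rewrite ifT //; move: le_m; lia.
Qed.

Definition coherent_coef (N k : nat) : C := (-1) ^+ (N - k) * sqrtC 'C(N, N - k)%:R.

Lemma majorana_bihom N (A : 'M[C]_N.+1) : majorana A =
  bihom N (fun k k' => coherent_coef N k * A (inord k) (inord k') * coherent_coef N k').
Proof. by apply: eq_bigr => k _; apply: eq_bigr => k' _; rewrite X4E !inord_val. Qed.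

Lemma coherent_coef_sq N k (x : C) :
  (k <= N)%N -> coherent_coef N k * x * coherent_coef N k = 'C(N, k)%:R * x.
Proof.
move=> le_kN; rewrite /coherent_coef; set e := (-1) ^+ _; set q := sqrtC _.
transitivity (e ^+ 2 * q ^+ 2 * x); first by ring.
by rewrite sqrr_sign sqrtCK bin_sub // mul1r.
Qed.

Lemma coherent_coef_sign N k k' (x : C) :
  coherent_coef N k * ((-1) ^+ (N - k') * x) * coherent_coef N k'
  = (-1) ^+ (N - k) * (sqrtC 'C(N, N - k)%:R * sqrtC 'C(N, N - k')%:R) * x.
Proof.
rewrite /coherent_coef; set e := (-1) ^+ (N - k').
transitivity (e ^+ 2 * ((-1) ^+ (N - k) * (sqrtC 'C(N, N - k)%:R * sqrtC 'C(N, N - k')%:R) * x)).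
  by ring.
by rewrite sqrr_sign mul1r.
Qed.

End Bihomogeneous.

Section Derivations.
Variable C : numClosedFieldType.
Local Notation P := {mpoly C[4]}.
Local Notation zz := (zz C).

Definition euler (i j : 'I_4) (p : P) : P := 'X_i * p^`M(i) + 'X_j * p^`M(j).

Lemma euler_sum i j (I : Type) (r : seq I) (F : I -> P) :
  euler i j (\sum_(x <- r) F x) = \sum_(x <- r) euler i j (F x).
Proof. by rewrite /euler !raddf_sum !mulr_sumr -big_split. Qed.

Lemma eulerZ i j (c : C) p : euler i j (c *: p) = c *: euler i j p.
Proof. by rewrite /euler !mderivZ scalerDr !scalerAr. Qed.

Lemma eulerM i j p q : euler i j (p * q) = euler i j p * q + p * euler i j q.
Proof. by rewrite /euler !mderivM; ring. Qed.

Lemma euler_mpolyX i j m : euler i j 'X_[m] = (m i + m j)%:R *: 'X_[m].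
Proof.
have XdX k : ('X_k : P) * 'X_[m]^`M(k) = (m k)%:R *: 'X_[m].
  rewrite mderivX -scalerAr; have [->|mk] := eqVneq (m k) 0%N; first by rewrite !scale0r.
  by rewrite -mpolyXD addmC submK ?lep1mP.
by rewrite /euler !XdX natrD scalerDl.
Qed.

Lemma euler01_bihom s f : euler i0 i1 (bihom s f) = s%:R * bihom s f.
Proof.
rewrite mulr_natl -scaler_nat scale_bihom /bihom euler_sum; apply: eq_bigr => k _.
rewrite euler_sum; apply: eq_bigr => k' _.
by rewrite eulerZ euler_mpolyX !mono4_val subnKC ?scalerA ?[_ * f _ _]mulrC // -ltnS.
Qed.

Lemma euler23_bihom s f : euler i2 i3 (bihom s f) = s%:R * bihom s f.
Proof.
rewrite mulr_natl -scaler_nat scale_bihom /bihom euler_sum; apply: eq_bigr => k _.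
rewrite euler_sum; apply: eq_bigr => k' _.
by rewrite eulerZ euler_mpolyX !mono4_val subnKC ?scalerA ?[_ * f _ _]mulrC // -ltnS.
Qed.

Lemma euler_expM i j (q p c : P) n :
  euler i j q = q -> euler i j p = c * p -> euler i j (q ^+ n * p) = (n%:R + c) * (q ^+ n * p).
Proof.
move=> Eq Ep; elim: n => [|n IHn]; first by rewrite expr0 !mul1r add0r.
by rewrite exprS -mulrA eulerM IHn Eq -natr1; ring.
Qed.

Lemma mderiv_var (i j : nat) : (i < 4)%N -> (j < 4)%N ->
  ('X_(inord j) : P)^`M(inord i) = if i == j then 1 else 0.
Proof.
move=> lt_i4 lt_j4; rewrite mderivX mnm1E -val_eqE /= !inordK // eq_sym.
case: eqP => [->|_]; last by rewrite mulr0n scale0r.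
by rewrite mulr1n -[X in (X - _)%MM]add0m addmK mpolyX0 scale1r.
Qed.

Lemma mderiv1 i : (1 : P)^`M(i) = 0.
Proof. exact: (mderivC i 1). Qed.

Ltac mderiv_simpl := rewrite /Defs.z1 /Defs.z2 /Defs.w1 /Defs.w2;
  do 3 rewrite ?(mderivD, mderivM, mderiv_var) //=
               ?(mderiv0, mderiv1, mul0r, mulr0, mul1r, mulr1, addr0, add0r).

Lemma euler01_zz : euler i0 i1 zz = zz.
Proof. by rewrite /euler /Defs.zz; mderiv_simpl; ring. Qed.

Lemma euler23_zz : euler i2 i3 zz = zz.
Proof. by rewrite /euler /Defs.zz; mderiv_simpl; ring. Qed.

Definition lap (p : P) : P := p^`M(i2)^`M(i0) + p^`M(i3)^`M(i1).

Lemma lapZ (c : C) p : lap (c *: p) = c *: lap p.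
Proof. by rewrite /lap !mderivZ scalerDr. Qed.

Lemma lap_zzM p : lap (zz * p) = zz * lap p + 2%:R * p + euler i0 i1 p + euler i2 i3 p.
Proof. by rewrite /lap /euler /Defs.zz; mderiv_simpl; ring. Qed.

Lemma lap_zzXM (q : P) s n :
  lap q = 0 -> euler i0 i1 q = s%:R * q -> euler i2 i3 q = s%:R * q ->
  lap (zz ^+ n.+1 * q) = (n.+1 * (n.+2 + 2 * s))%:R * (zz ^+ n * q).
Proof.
move=> Lq E01 E23; elim: n => [|n IHn].
  by rewrite expr1 lap_zzM Lq E01 E23 expr0 mul1r mulr0 add0r !natrM !natrD; ring.
rewrite exprS -mulrA lap_zzM IHn (euler_expM _ euler01_zz E01) (euler_expM _ euler23_zz E23).
by rewrite !natrM !natrD -!natr1 !exprS; ring.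
Qed.

Lemma lap_bihom s f : lap (bihom s.+1 f) = bihom s (fun k k' =>
  f k.+1 k'.+1 *+ (k.+1 * k'.+1) + f k k' *+ ((s.+1 - k) * (s.+1 - k'))).
Proof.
apply/mpolyP => m.
rewrite /lap mcoeffD !mcoeff_deriv (mono4_eta m) !mnm1_mono4 !inordK //=.
rewrite !mono4D !mono4_val !mcoeff_bihom !mono4_val !addn0 !addn1 !addnS !addSn !eqSS.
case: ifP => [/andP[/eqP E01 /eqP E23] | _]; last by rewrite !mul0rn addr0.
have -> : (s.+1 - m i0 = (m i1).+1)%N by lia.
have -> : (s.+1 - m i2 = (m i3).+1)%N by lia.
by rewrite -!mulrnA mulnC [((m i3).+1 * _)%N]mulnC.
Qed.

Definition harm_coef (s : nat) (mu : int) (j j' : nat) : C :=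
  if j%:Z - j'%:Z == mu then (-1) ^+ (s - j) * 'C(s, j)%:R * 'C(s, j')%:R else 0.

Definition harm (s : nat) (mu : int) : P := bihom s (harm_coef s mu).

Lemma lap_harm s mu : lap (harm s mu) = 0.
Proof.
case: s => [|s].
  rewrite /lap /harm /bihom !big_ord1 !mderivZ /X4 !mderivX !mono4_val.
  by rewrite !scale0r !mderiv0 !scaler0 addr0.
rewrite /harm lap_bihom -(bihom0 C s); apply: eq_bihom => k k' le_ks _.
rewrite /harm_coef.
have -> : k.+1%:Z - k'.+1%:Z = k%:Z - k'%:Z by rewrite !intS opprD addrACA subrr add0r.
case: eqP => _; last by rewrite !mul0rn addr0.
have binS j : (j.+1%:R * 'C(s.+1, j.+1)%:R = (s.+1 - j)%:R * 'C(s.+1, j)%:R :> C).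
  by rewrite -!natrM mul_bin_left.
have sign : (-1) ^+ (s.+1 - k) = - (-1) ^+ (s - k) :> C by rewrite subSn // exprS mulN1r.
rewrite subSS sign -[X in X + _]mulr_natr -[X in _ + X]mulr_natr !natrM.
set x := (-1) ^+ (s - k).
transitivity (x * ((k.+1%:R * 'C(s.+1, k.+1)%:R) * (k'.+1%:R * 'C(s.+1, k'.+1)%:R))
  - x * (((s.+1 - k)%:R * 'C(s.+1, k)%:R) * ((s.+1 - k')%:R * 'C(s.+1, k')%:R))).
  by ring.
by rewrite !binS subrr.
Qed.

End Derivations.

Section Racah.
Variable C : numClosedFieldType.

Lemma natr_fact_neq0 n : (n`!%:R : C) != 0.
Proof. by rewrite pnatr_eq0 -lt0n fact_gt0. Qed.

Lemma natr_bin n k : (k <= n)%N -> 'C(n, k)%:R = n`!%:R / (k`!%:R * (n - k)`!%:R) :> C.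
Proof. by move=> le_kn; rewrite -(bin_fact le_kn) !natrM mulfK // mulf_neq0 ?natr_fact_neq0. Qed.

Lemma add1r_neq0 (x : C) : 0 <= x -> 1 + x != 0.
Proof. by move=> x_ge0; rewrite lt0r_neq0 // ltr_pwDl ?ltr01. Qed.

Lemma sqrtCM_ge0 (x y : C) : 0 <= x -> 0 <= y -> sqrtC (x * y) = sqrtC x * sqrtC y.
Proof. by move=> x_ge0 y_ge0; rewrite sqrtCM ?nnegrE. Qed.

Lemma sqrtCM_eq (x y a z : C) : 0 <= x -> 0 <= y -> 0 <= a -> 0 <= z ->
  x * y = a ^+ 2 * z -> sqrtC x * sqrtC y = a * sqrtC z.
Proof.
move=> x_ge0 y_ge0 a_ge0 z_ge0 Exy.
by rewrite -sqrtCM_ge0 // Exy sqrtCM_ge0 ?exprn_ge0 // sqrCK.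
Qed.

Definition racah_norm (N sigma : nat) : C :=
  sqrtC ((2 * sigma + 1)%:R * sigma`!%:R * sigma`!%:R * (N - sigma)`!%:R
         / (N + sigma + 1)`!%:R).

(* The guard is the range of Racah's sum; on it every truncated subtraction
   below is exact. *)
Definition racah_term (N sigma k k' t : nat) : C :=
  if [&& t <= N - k, t <= N - k', N - sigma <= k + t & N - sigma <= k' + t]%N
  then (-1) ^+ t / (t`!%:R * (N - sigma - t)`!%:R * (N - k - t)`!%:R * (N - k' - t)`!%:R
                    * (k + t - (N - sigma))`!%:R * (k' + t - (N - sigma))`!%:R)
  else 0.

Ltac half_to e v := rewrite (_ : Defs.half e = v); last by rewrite /Defs.half; lia.

Lemma CG_tensorE (N sigma k k' : nat) (mu : int) :
  (sigma <= N)%N -> - (sigma%:Z) <= mu <= sigma%:Z -> (k <= N)%N -> (k' <= N)%N ->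
  CG C N (2 * k%:Z - N%:Z) N (- (2 * k'%:Z - N%:Z)) (2 * sigma%:Z) (2 * mu) =
  if k%:Z - k'%:Z == mu then
    racah_norm N sigma
    * sqrtC (ifact C (sigma%:Z + mu) * ifact C (sigma%:Z - mu)
             * (N - k)`!%:R * k`!%:R * k'`!%:R * (N - k')`!%:R)
    * \sum_(t < (N - sigma).+1) racah_term N sigma k k' t
  else 0.
Proof.
move=> le_sN hmu le_kN le_k'N; rewrite /CG.
rewrite (_ : [&& _, _, _, _, _, _, _, _, _, _, _, _ & _] = (k%:Z - k'%:Z == mu)); last first.
  by apply/idP/idP; lia.
case: eqP => // Ekk'.
half_to (2 * sigma%:Z + N%:Z - N%:Z) (sigma%:Z).
half_to (2 * sigma%:Z - N%:Z + N%:Z) (sigma%:Z).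
half_to (N%:Z + N%:Z - 2 * sigma%:Z) ((N - sigma)%N%:Z).
half_to (N%:Z + N%:Z + 2 * sigma%:Z) ((N + sigma)%N%:Z).
half_to (2 * sigma%:Z + 2 * mu) (sigma%:Z + mu).
half_to (2 * sigma%:Z - 2 * mu) (sigma%:Z - mu).
half_to (N%:Z - (2 * k%:Z - N%:Z)) ((N - k)%N%:Z).
half_to (N%:Z + (2 * k%:Z - N%:Z)) (k%:Z).
half_to (N%:Z - - (2 * k'%:Z - N%:Z)) (k'%:Z).
half_to (N%:Z - (2 * k'%:Z - N%:Z)) ((N - k')%N%:Z).
half_to (2 * sigma%:Z - N%:Z + (2 * k%:Z - N%:Z)) (sigma%:Z + k%:Z - N%:Z).
half_to (2 * sigma%:Z - N%:Z - - (2 * k'%:Z - N%:Z)) (sigma%:Z + k'%:Z - N%:Z).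
(* [ifact C n%:Z] is [n`!%:R] by conversion, so [congr] closes both square roots. *)
rewrite absz_nat; congr (_ * _ * _).
apply: eq_bigr => t _; rewrite /racah_term; have lt_t := ltn_ord t.
case: ifP => cond; last by rewrite ifF //; move: cond; lia.
rewrite ifT; last by move: cond; lia.
have [le_t1 le_t2 le_t3] : [/\ t <= N - sigma, t <= N - k & t <= N - k']%N.
  by split; move: cond; lia.
rewrite (subzn le_t1) (subzn le_t2) (subzn le_t3).
have -> : sigma%:Z + k%:Z - N%:Z + t%:Z = (k + t - (N - sigma))%N by move: cond; lia.
by have -> : sigma%:Z + k'%:Z - N%:Z + t%:Z = (k' + t - (N - sigma))%N by move: cond; lia.
Qed.

Lemma sqrtC_bin_fact N k k' (F : C) : 0 <= F -> (k <= N)%N -> (k' <= N)%N ->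
  sqrtC 'C(N, N - k)%:R * sqrtC 'C(N, N - k')%:R
    * sqrtC (F * (N - k)`!%:R * k`!%:R * k'`!%:R * (N - k')`!%:R)
  = N`!%:R * sqrtC F.
Proof.
move=> F_ge0 le_kN le_k'N.
have binE j : (j <= N)%N -> ('C(N, N - j) * ((N - j)`! * j`!) = N`!)%N.
  by move=> le_jN; rewrite -{3}(subKn le_jN) bin_fact ?leq_subr.
rewrite -sqrtCM_ge0 ?ler0n //; apply: sqrtCM_eq; rewrite ?(mulr_ge0, ler0n) //.
by rewrite expr2 -{1}(binE k le_kN) -(binE k' le_k'N) !natrM; ring.
Qed.

Lemma racah_binomial_term (n t s j j' : nat) : (t <= n)%N -> (j <= s)%N -> (j' <= s)%N ->
  (-1) ^+ (s - j + t) * ((-1) ^+ t / (t`!%:R * (n - t)`!%:R * (s - j)`!%:R * (s - j')`!%:R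
                                      * j`!%:R * j'`!%:R))
  = (-1) ^+ (s - j) * 'C(n, t)%:R * 'C(s, j)%:R * 'C(s, j')%:R
    / (n`!%:R * s`!%:R * s`!%:R) :> C.
Proof.
move=> le_tn le_js le_j's.
rewrite exprD -mulrA [X in _ * X]mulrA -expr2 sqrr_sign mul1r.
by rewrite !natr_bin //; field; rewrite !natr_fact_neq0.
Qed.

Lemma racah_sum_harm (N sigma k k' : nat) (mu : int) :
  (sigma <= N)%N -> (k <= N)%N -> (k' <= N)%N -> k%:Z - k'%:Z = mu ->
  (-1) ^+ (N - k) * \sum_(t < (N - sigma).+1) racah_term N sigma k k' t =
  (\sum_(t < (N - sigma).+1)
     if [&& N - sigma - t <= k, N - sigma - t <= k', t <= N - k & t <= N - k']%N
     then 'C(N - sigma, t)%:R * harm_coef C sigma mu (k - (N - sigma - t)) (k' - (N - sigma - t))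
     else 0)
  / ((N - sigma)`!%:R * sigma`!%:R * sigma`!%:R).
Proof.
move=> le_sN le_kN le_k'N Ekk'; rewrite mulr_sumr mulr_suml; apply: eq_bigr => t _.
have lt_t := ltn_ord t; rewrite /racah_term.
case: ifP => cond; last by rewrite ifF ?mulr0 ?mul0r //; move: cond; lia.
rewrite ifT; last by move: cond; lia.
rewrite /harm_coef ifT; last by apply/eqP; move: cond; lia.
set j := (k - (N - sigma - t))%N; set j' := (k' - (N - sigma - t))%N.
have -> : (N - k - t = sigma - j)%N by rewrite /j; move: cond; lia.
have -> : (N - k = sigma - j + t)%N by rewrite /j; move: cond; lia.
have -> : (N - k' - t = sigma - j')%N by rewrite /j'; move: cond; lia.
have -> : (k + t - (N - sigma) = j)%N by rewrite /j; move: cond; lia.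
have -> : (k' + t - (N - sigma) = j')%N by rewrite /j'; move: cond; lia.
have [le_tn le_js le_j's] : [/\ t <= N - sigma, j <= sigma & j' <= sigma]%N.
  by split; rewrite ?/j ?/j'; move: cond; lia.
by rewrite racah_binomial_term // !mulrA [_ * 'C(N - sigma, t)%:R]mulrC.
Qed.

Definition pT_coef (N sigma : nat) (mu : int) : C :=
  N`!%:R * racah_norm N sigma * sqrtC (ifact C (sigma%:Z + mu) * ifact C (sigma%:Z - mu))
  / ((N - sigma)`!%:R * sigma`!%:R * sigma`!%:R).

Lemma tensor_entry (N sigma k k' : nat) (mu : int) :
  (sigma <= N)%N -> - (sigma%:Z) <= mu <= sigma%:Z -> (k <= N)%N -> (k' <= N)%N ->
  coherent_coef C N k * tensorOp C N sigma mu (inord k) (inord k') * coherent_coef C N k' =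
  pT_coef N sigma mu * \sum_(t < (N - sigma).+1)
     if [&& N - sigma - t <= k, N - sigma - t <= k', t <= N - k & t <= N - k']%N
     then 'C(N - sigma, t)%:R * harm_coef C sigma mu (k - (N - sigma - t)) (k' - (N - sigma - t))
     else 0.
Proof.
move=> le_sN hmu le_kN le_k'N.
rewrite /tensorOp mxE !inordK ?ltnS // CG_tensorE //.
case: eqP => [Ekk' | Nkk']; last first.
  rewrite mulr0 mulr0 mul0r big1 ?mulr0 // => t _; have lt_t := ltn_ord t.
  case: ifP => // cond; rewrite /harm_coef ifF ?mulr0 //.
  by apply/negbTE/eqP => E; apply: Nkk'; move: cond E; lia.
set F := ifact C (sigma%:Z + mu) * ifact C (sigma%:Z - mu).
have F_ge0 : 0 <= F by rewrite mulr_ge0 ?ler0n.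
have Esum := racah_sum_harm le_sN le_kN le_k'N Ekk'.
rewrite coherent_coef_sign; set R := racah_norm N sigma.
set Sr := \sum_(t < _) racah_term N sigma k k' t in Esum *.
transitivity ((sqrtC 'C(N, N - k)%:R * sqrtC 'C(N, N - k')%:R
   * sqrtC (F * (N - k)`!%:R * k`!%:R * k'`!%:R * (N - k')`!%:R)) * R * ((-1) ^+ (N - k) * Sr)).
  by ring.
rewrite sqrtC_bin_fact // Esum /pT_coef -/R -/F.
by field; rewrite !natr_fact_neq0.
Qed.

Lemma pT_closed (N sigma : nat) (mu : int) :
  (sigma <= N)%N -> - (sigma%:Z) <= mu <= sigma%:Z ->
  pT C N sigma mu = pT_coef N sigma mu *: (zz C ^+ (N - sigma) * harm C sigma mu).
Proof.
move=> le_sN hmu; rewrite /harm zzXM_bihom subnK // scale_bihom /pT majorana_bihom.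
by apply: eq_bihom => k k' le_kN le_k'N; rewrite tensor_entry.
Qed.

Lemma racah_norm_top N sigma : (sigma <= N)%N ->
  racah_norm N sigma * sqrtC (((N + sigma + 1)`! * (N - sigma)`!)%:R / (2 * sigma + 1)`!%:R)
  = (N - sigma)`!%:R * racah_norm sigma sigma.
Proof.
move=> le_sN; apply: sqrtCM_eq; rewrite ?(mulr_ge0, invr_ge0, ler0n) //.
rewrite subnn fact0 (_ : (sigma + sigma + 1 = 2 * sigma + 1)%N); last by lia.
by rewrite !natrM; field; rewrite !natr_fact_neq0.
Qed.

Lemma racah_norm_succ N sigma : (sigma <= N)%N ->
  racah_norm N.+1 sigma * sqrtC ((N.+1 + sigma + 1) * (N.+1 - sigma))%:R
  = (N.+1 - sigma)%:R * racah_norm N sigma.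
Proof.
move=> le_sN; apply: sqrtCM_eq; rewrite ?(mulr_ge0, invr_ge0, ler0n) //.
rewrite subSn // (_ : (N.+1 + sigma + 1 = (N + sigma + 1).+1)%N); last by lia.
rewrite !factS !natrM; field.
by rewrite !natr_fact_neq0 add1r_neq0 ?addr_ge0 ?ler0n.
Qed.

Lemma pT_coef_lcoef N sigma (mu : int) : (sigma <= N)%N ->
  pT_coef N sigma mu * lcoef C N sigma = pT_coef sigma sigma mu.
Proof.
move=> le_sN; have E := racah_norm_top le_sN; rewrite /pT_coef /lcoef.
set X := sqrtC (_ / (2 * sigma + 1)`!%:R) in E *.
set F := sqrtC (ifact C _ * _).
transitivity (racah_norm N sigma * X * F / ((N - sigma)`!%:R * sigma`!%:R)).
  by field; rewrite !natr_fact_neq0.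
by rewrite E subnn fact0; field; rewrite !natr_fact_neq0.
Qed.

Lemma pT_coef_succ N sigma (mu : int) : (sigma <= N)%N ->
  pT_coef N.+1 sigma mu * sqrtC ((N.+1 + sigma + 1) * (N.+1 - sigma))%:R
  = N.+1%:R * pT_coef N sigma mu.
Proof.
move=> le_sN; have E := racah_norm_succ le_sN; rewrite /pT_coef.
set F := sqrtC (ifact C _ * _).
transitivity (N.+1`!%:R * (racah_norm N.+1 sigma * sqrtC ((N.+1 + sigma + 1) * (N.+1 - sigma))%:R)
              * F / ((N.+1 - sigma)`!%:R * sigma`!%:R * sigma`!%:R)).
  by field; rewrite !natr_fact_neq0.
rewrite E subSn // !factS !natrM; field.
by rewrite !natr_fact_neq0 add1r_neq0 ?ler0n.
Qed.

End Racah.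

Section PartialTrace.
Variable C : numClosedFieldType.

Lemma LopE N (p : {mpoly C[4]}) : Lop N p = (N%:R ^+ 2)^-1 *: lap p.
Proof. by []. Qed.

Lemma Lop_pT N sigma (mu : int) : (sigma <= N)%N -> - (sigma%:Z) <= mu <= sigma%:Z ->
  Lop N (pT C N sigma mu) =
    if (sigma < N)%N
    then (sqrtC ((N + sigma + 1) * (N - sigma))%:R / N%:R) *: pT C N.-1 sigma mu
    else 0.
Proof.
move=> le_sN hmu; rewrite LopE (pT_closed C le_sN hmu) lapZ.
case: ltnP => [lt_sN | le_Ns]; last first.
  by rewrite (_ : N - sigma = 0)%N ?expr0 ?mul1r ?lap_harm ?scaler0 //; lia.
case: N lt_sN le_sN => // M; rewrite ltnS => le_sM _ /=.
rewrite (pT_closed C le_sM hmu) [in zz C ^+ _]subSn //.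
rewrite (lap_zzXM (s := sigma)) ?lap_harm ?euler01_bihom ?euler23_bihom //.
rewrite mulr_natl -scaler_nat !scalerA; congr (_ *: _).
have E := pT_coef_succ C mu le_sM; set q := sqrtC _ in E *.
have -> : ((M - sigma).+1 * ((M - sigma).+2 + 2 * sigma))%:R = q * q :> C.
  by rewrite -expr2 sqrtCK mulnC subSn //; congr (_ * _)%:R; lia.
transitivity ((M.+1%:R ^+ 2)^-1 * (pT_coef C M.+1 sigma mu * q) * q); first by ring.
by rewrite E; field; rewrite add1r_neq0 ?ler0n.
Qed.

Lemma Lop_majorana_diag N (A : 'M[C]_N.+2) (A' : 'M[C]_N.+1) :
  majorana A' = Lop N.+1 (majorana A) -> forall j : 'I_N.+1,
  A' j j = (j.+1%:R * A (inord j.+1) (inord j.+1) + (N.+1 - j)%:R * A (inord j) (inord j))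
           / N.+1%:R.
Proof.
rewrite LopE !majorana_bihom lap_bihom scale_bihom => E j.
have := bihom_inj E (ltn_ord j) (ltn_ord j); rewrite inord_val.
have le_jN : (j <= N)%N := ltn_ord j.
rewrite !coherent_coef_sq ?(ltn_ord j) ?(leqW le_jN) // => Ejj.
have binS : (j.+1 * 'C(N.+1, j.+1) = N.+1 * 'C(N, j))%N by rewrite -mul_bin_diag.
have binD : ((N.+1 - j) * 'C(N.+1, j) = N.+1 * 'C(N, j))%N by rewrite -mul_bin_down.
have binN : 'C(N, j)%:R != 0 :> C by rewrite pnatr_eq0 -lt0n bin_gt0.
apply: (mulfI binN); rewrite Ejj -[X in X + _]mulr_natr -[X in _ + X]mulr_natr !natrM.
transitivity (N.+1%:R ^- 2 * ((j.+1 * 'C(N.+1, j.+1))%:R * j.+1%:R * A (inord j.+1) (inord j.+1)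
   + ((N.+1 - j) * 'C(N.+1, j))%:R * (N.+1 - j)%:R * A (inord j) (inord j))).
  by rewrite !natrM; ring.
by rewrite binS binD natrM; field; rewrite add1r_neq0 ?ler0n.
Qed.

Lemma sum_shift_weights N (a : nat -> C) :
  \sum_(j < N.+1) (j.+1%:R * a j.+1 + (N.+1 - j)%:R * a j) = N.+1%:R * \sum_(i < N.+2) a i.
Proof.
have up : \sum_(j < N.+1) j.+1%:R * a j.+1 = \sum_(i < N.+2) i%:R * a i.
  by rewrite [RHS]big_ord_recl /= mul0r add0r.
have down : \sum_(j < N.+1) (N.+1 - j)%:R * a j = \sum_(i < N.+2) (N.+1 - i)%:R * a i.
  by rewrite [RHS]big_ord_recr /= subnn mul0r addr0.
rewrite big_split /= up down -big_split mulr_sumr; apply: eq_bigr => i _.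
by rewrite /= -mulrDl -natrD subnKC // -ltnS.
Qed.

Lemma Lop_majorana_trace N (A : 'M[C]_N.+2) (A' : 'M[C]_N.+1) :
  majorana A' = Lop N.+1 (majorana A) -> \tr A' = \tr A.
Proof.
move=> E; rewrite /mxtrace; under eq_bigr => j _ do rewrite (Lop_majorana_diag E).
rewrite -mulr_suml (sum_shift_weights N (fun i => A (inord i) (inord i))) mulrC mulKf ?pnatr_eq0 //.
by apply: eq_bigr => i _; rewrite inord_val.
Qed.

End PartialTrace.

Unset Implicit Arguments.

Theorem theorem1 (C : numClosedFieldType) (N : nat) (hN : (0 < N)%N) :
  (* (1) *)
  (forall (sigma : nat) (mu : int), (sigma <= N)%N ->
     - (sigma%:Z) <= mu <= sigma%:Z ->
     Lop N (pT C N sigma mu) =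
       (if (sigma < N)%N
        then (sqrtC (((N + sigma + 1) * (N - sigma))%:R) / N%:R)
               *: pT C N.-1 sigma mu
        else 0))
  /\ (sqrtC (N.+1)%:R)^-1 *: Lop N (pT C N 0 0)
       = (sqrtC (N%:R : C))^-1 *: pT C N.-1 0 0
  /\ ((1 < N)%N ->
      forall (A : 'M[C]_N.+1) (A' : 'M[C]_((N.-1).+1)),
        majorana A' = Lop N (majorana A) -> \tr A' = \tr A)
  (* (2) *)
  /\ (forall (sigma : nat) (mu : int), (sigma <= N)%N ->
        - (sigma%:Z) <= mu <= sigma%:Z ->
        pT C N sigma mu
          = (lcoef C N sigma)^-1 *: (zz C ^+ (N - sigma) * pT C sigma sigma mu)).
Proof.
split; [exact: Lop_pT | split; [|split]].
- rewrite Lop_pT // hN scalerA addn0 subn0 addn1 natrM sqrtCM_ge0 ?ler0n //.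
  have sN1 : sqrtC N.+1%:R != 0 :> C by rewrite sqrtC_eq0 pnatr_eq0.
  have sN : sqrtC N%:R != 0 :> C by rewrite sqrtC_eq0 pnatr_eq0 -lt0n.
  congr (_ *: _); rewrite -[X in _ / X](sqrtCK (N%:R : C)).
  by field; rewrite sN1 sN.
- by case: N hN => // N _ _; exact: Lop_majorana_trace.
- move=> sigma mu le_sN hmu.
  rewrite (pT_closed C le_sN hmu) (pT_closed C (leqnn sigma) hmu) subnn expr0 mul1r.
  rewrite -scalerAr scalerA -(pT_coef_lcoef C mu le_sN); congr (_ *: _).
  have lcoef_neq0 : lcoef C N sigma != 0.
    by rewrite /lcoef; do 4 rewrite ?(mulf_neq0, invr_neq0, sqrtC_eq0, natrM, natr_fact_neq0) //.
  by rewrite mulrC mulfK.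
Qed.
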